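(* Let $\{n_k\}_{k\ge1}\subset\mathbb{Z}^+$ and $\{c_k\}_{k\ge1}\subset\mathbb{R}^+$ satisfy $n_k\ge 2$ and $n_kc_k<1$ for all $k\ge1$, let $I\subset\mathbb{R}$ be a nonempty closed interval, and let $E\in\mathcal{M}(I,\{n_k\},\{c_k\})$ be a homogeneous Moran set. If $\sup_{k\ge1}n_k<+\infty$, then $$\dim_L E\le\liminf_{l\to+\infty}\ \inf_{k\ge1}\ \frac{\log (n_{k+1}\cdots n_{k+l})}{-\log (c_{k+1}\cdots c_{k+l})}.$$
   Context: Words: $\Omega_0=\{\emptyset\}$, $\Omega_k=\{\sigma_1\cdots\sigma_k:1\le\sigma_j\le n_j\}$, $\Omega=\bigcup_{k\ge0}\Omega_k$; for $\sigma\in\Omega_{k-1}$ and $1\le i\le n_k$, $\sigma*i\in\Omega_k$ denotes concatenation. A collection $\{I_\sigma:\sigma\in\Omega\}$ of closed intervals is a homogeneous Moran structure if $I_\emptyset=I$; for each $k\ge1$ and $\sigma\in\Omega_{k-1}$, the intervals $I_{\sigma*1},\dots,I_{\sigma*n_k}$ are contained in $I_\sigma$ and have pairwise disjoint interiors; and $|I_{\sigma*i}|/|I_\sigma|=c_k$ for all such $\sigma,i$ ($|\cdot|$ = diameter). The set $E=\bigcap_{k\ge1}\bigcup_{\sigma\in\Omega_k}I_\sigma$ is a homogeneous Moran set, and $\mathcal{M}(I,\{n_k\},\{c_k\})$ is the class of all such sets. For $F\subset\mathbb{R}$, $N_r(A)$ is the smallest number of balls of radius $r$ covering $A$, and the lower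 dimension is $\dim_L F=\sup\{s\ge0:\exists\, b,c>0\ \forall\, 0<r<R<b,\ \forall x\in F,\ N_r(B(x,R)\cap F)\ge c(R/r)^s\}$. *)

From HB Require Import structures.
From mathcomp Require Import all_boot all_order all_algebra.
From mathcomp Require Import all_classical all_reals all_analysis.
Set Implicit Arguments. Unset Strict Implicit. Unset Printing Implicit Defensive.
Import Order.TTheory GRing.Theory Num.Theory.
Import numFieldNormedType.Exports.
Local Open Scope classical_set_scope.
Local Open Scope ring_scope.

(* Words of length k: sigma_1 ... sigma_k with 1 <= sigma_j <= n_j,
   represented as a seq nat (entry j-1 of the list is sigma_j). *)
Definition word (n : nat -> nat) (k : nat) (s : seq nat) : Prop :=
  size s = k /\ forall j : nat, (j < k)%N -> (1 <= nth 0%N s j <= n j.+1)%N.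

(* A homogeneous Moran structure: I_sigma = [a sigma, b sigma]. *)
Definition moran_structure (R : realType) (I0 I1 : R) (n : nat -> nat)
    (c : nat -> R) (a b : seq nat -> R) : Prop :=
  (forall s, a s <= b s) /\
  a [::] = I0 /\ b [::] = I1 /\
  (forall (k : nat) (s : seq nat), (1 <= k)%N -> word n k.-1 s ->
     (forall i : nat, (1 <= i <= n k)%N ->
        `[a (rcons s i), b (rcons s i)] `<=` `[a s, b s]) /\
     (forall i j : nat, (1 <= i <= n k)%N -> (1 <= j <= n k)%N -> i <> j ->
        `]a (rcons s i), b (rcons s i)[ `&` `]a (rcons s j), b (rcons s j)[ = set0) /\
     (forall i : nat, (1 <= i <= n k)%N ->
        b (rcons s i) - a (rcons s i) = c k * (b s - a s))).

Definition moran_set (R : realType) (n : nat -> nat) (a b : seq nat -> R) : set R :=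
  [set x | forall k : nat, (1 <= k)%N ->
     exists s, word n k s /\ a s <= x <= b s].

Definition in_moran_class (R : realType) (E : set R) (I0 I1 : R)
    (n : nat -> nat) (c : nat -> R) : Prop :=
  exists a b : seq nat -> R,
    moran_structure I0 I1 n c a b /\ E = moran_set n a b.

(* N_r(A): least number of (open) balls of radius r covering A (+oo if none). *)
Definition covering_number (R : realType) (r : R) (A : set R) : \bar R :=
  ereal_inf [set (m%:R)%:E | m in [set m : nat | exists xs : seq R,
      size xs = m /\ A `<=` \bigcup_(x in [set x | x \in xs]) ball x r]].

Definition lower_dim (R : realType) (F : set R) : \bar R :=
  ereal_sup [set s%:E | s in [set s : R | 0 <= s /\
     exists b c : R, 0 < b /\ 0 < c /\
       forall r Rr : R, 0 < r -> r < Rr -> Rr < b ->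
         forall x, F x ->
           ((c * (Rr / r) `^ s)%:E <= covering_number r (ball x Rr `&` F))%E]].

Definition moran_ratio (R : realType) (n : nat -> nat) (c : nat -> R) (k l : nat) : R :=
  ln (\prod_(k.+1 <= j < (k + l).+1) (n j)%:R) /
  (- ln (\prod_(k.+1 <= j < (k + l).+1) c j)).

Definition moran_bound (R : realType) (n : nat -> nat) (c : nat -> R) : \bar R :=
  limn_einf (fun l : nat =>
    ereal_inf [set (moran_ratio n c k l)%:E | k in [set k : nat | (1 <= k)%N]]).

From HB Require Import structures.
From mathcomp Require Import all_boot all_order all_algebra.
From mathcomp Require Import all_classical all_reals all_analysis.
Import Order.TTheory GRing.Theory Num.Theory.
Local Open Scope classical_set_scope.
Local Open Scope ring_scope.
From mathcomp Require Import ring lra.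
Set Implicit Arguments. Unset Strict Implicit.
Import numFieldNormedType.Exports.

(* A ball of radius L_k (the common length of the level-k basic intervals)
   centred in E meets at most three of them, and each level-k interval is
   covered by n_{k+1}...n_{k+l} balls of radius L_{k+l}, centred at the
   midpoints of its level-(k+l) subintervals.  Taking R = min(L_k, b/2) and
   r = L_{k+l} = L_k c_{k+1}...c_{k+l} in the definition of the lower dimension
   gives c (beta / (c_{k+1}...c_{k+l}))^s <= 3 n_{k+1}...n_{k+l} for some beta > 0,
   all large l and all k.  As n_j >= 2 and n_j c_j < 1 force c_j <= 1/2, we have
   -log (c_{k+1}...c_{k+l}) >= l log 2, so after taking logarithms the constants
   only contribute O(1/l), which vanishes in the liminf. *)

Section Words.
Variable n : nat -> nat.

Lemma word_rcons m s i :
  word n m.+1 (rcons s i) <-> word n m s /\ (1 <= i <= n m.+1)%N.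
Proof.
rewrite /word size_rcons; split.
- move=> [[sz] hs]; split; last by have := hs m (ltnSn m); rewrite nth_rcons sz ltnn eqxx.
  by split=> // j jm; have := hs j (ltnW jm); rewrite nth_rcons sz jm.
- move=> [[sz hs] hi]; split; first by rewrite sz.
  move=> j; rewrite ltnS leq_eqVlt => /orP[/eqP ->|jm]; rewrite nth_rcons sz.
    by rewrite ltnn eqxx.
  by rewrite jm; apply: hs.
Qed.

Lemma word0 s : word n 0 s -> s = [::].
Proof. by case=> /size0nil. Qed.

Lemma wordSP m s : word n m.+1 s ->
  exists s' i, [/\ s = rcons s' i, word n m s' & (1 <= i <= n m.+1)%N].
Proof. by case/lastP: s => [[//]|s' i] /word_rcons[ws hi]; exists s', i. Qed.

Lemma word_take m j s : (j <= m)%N -> word n m s -> word n j (take j s).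
Proof.
move=> jm [sz hs]; split; first by rewrite size_take sz; case: ltngtP jm.
by move=> i ij; rewrite nth_take //; apply: hs; apply: leq_trans ij jm.
Qed.

Lemma word_drop k l s : word n (k + l) s -> word (fun j => n (k + j)) l (drop k s).
Proof.
move=> [sz hs]; split; first by rewrite size_drop sz addKn.
by move=> j jl; rewrite nth_drop /= addnS; apply: hs; rewrite ltn_add2l.
Qed.

Fixpoint words l : seq (seq nat) :=
  if l is l'.+1 then [seq rcons s i | s <- words l', i <- iota 1 (n l'.+1)]
  else [:: [::]].

Lemma mem_words l s : s \in words l <-> word n l s.
Proof.
have mem_iota1 m i : (i \in iota 1 (n m)) = (1 <= i <= n m)%N.
  by rewrite mem_iota addnC addn1 ltnS.
elim: l s => [|l IH] s /=.
  by rewrite inE; split=> [/eqP ->|/word0 ->].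
split=> [/allpairsP[[s' i] /= [/IH ws hi ->]]|].
  by apply/word_rcons; rewrite -mem_iota1.
case/lastP: s => [[//]|s' i] /word_rcons[/IH ws hi].
by apply: allpairs_f; rewrite ?mem_iota1.
Qed.

Lemma size_words l : size (words l) = (\prod_(1 <= j < l.+1) n j)%N.
Proof.
elim: l => [|l IH] /=; first by rewrite big_geq.
by rewrite size_allpairs size_iota IH [in RHS]big_nat_recr.
Qed.

End Words.

Lemma size_words_shift (n : nat -> nat) k l :
  size (words (fun j => n (k + j)) l) = (\prod_(k.+1 <= j < (k + l).+1) n j)%N.
Proof.
rewrite size_words -(add1n k) big_addn subSn ?leq_addr // addKn.
by apply: eq_bigr => j _; rewrite addnC.
Qed.

Lemma separated_in_window_size (R : realDomainType) (T : eqType) (S : seq T)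
    (p : T -> R) (x L : R) :
  uniq S -> {in S &, forall s t, s != t -> p s + L <= p t \/ p t + L <= p s} ->
  {in S, forall s, x - 2 * L < p s < x + L} -> (size S <= 3)%N.
Proof.
move=> uS sep win.
pose third s := if p s < x - L then 0%N else if p s < x then 1%N else 2%N.
rewrite -(size_map third) -[3%N]/(size [:: 0; 1; 2]%N).
apply: uniq_leq_size => [|_ /mapP[s _ ->]]; last first.
  by rewrite /third; case: ifP => _; [|case: ifP]; rewrite !inE.
rewrite map_inj_in_uniq // => s t sS tS; apply: contra_eq => st.
have /andP[s1 s2] := win s sS; have /andP[t1 t2] := win t tS.
rewrite /third; case: (sep s t sS tS st) => h;
by case: (ltP (p s) (x - L)); case: (ltP (p s) x);
   case: (ltP (p t) (x - L)); case: (ltP (p t) x) => //=; lra.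
Qed.

Lemma covering_number_le (R : realType) (r : R) (A : set R) (xs : seq R) :
  A `<=` \bigcup_(x in [set x | x \in xs]) ball x r ->
  (covering_number r A <= (size xs)%:R%:E)%E.
Proof. by move=> cover; apply: ereal_inf_lbound; exists (size xs) => //; exists xs. Qed.

Lemma ballE (R : realFieldType) (x r y : R) : ball x r y <-> x - r < y < x + r.
Proof. by rewrite -ball_normE /= ltr_distlC. Qed.

Lemma itvoo_disjoint_sep (R : realFieldType) (x1 y1 x2 y2 : R) :
  x1 < y1 -> x2 < y2 -> `]x1, y1[ `&` `]x2, y2[ = set0 -> y1 <= x2 \/ y2 <= x1.
Proof.
move=> lt1 lt2 disj; case: (leP y1 x2) => [|h1]; first by left.
case: (leP y2 x1) => [|h2]; first by right.
suff [z z1 z2] : exists2 z, x1 < z < y1 & x2 < z < y2.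
  have : (`]x1, y1[ `&` `]x2, y2[) z by split; rewrite /= in_itv.
  by rewrite disj.
case: (leP x1 x2) => ?; case: (leP y1 y2) => ?;
  [exists ((x2 + y1) / 2)|exists ((x2 + y2) / 2)|
   exists ((x1 + y1) / 2)|exists ((x1 + y2) / 2)]; apply/andP; split; lra.
Qed.

Definition level_length (R : realType) (I0 I1 : R) (c : nat -> R) (k : nat) : R :=
  (I1 - I0) * \prod_(1 <= j < k.+1) c j.

Lemma level_length_gt0 (R : realType) (I0 I1 : R) (c : nat -> R) k :
  (forall j, (1 <= j)%N -> 0 < c j) -> I0 < I1 -> 0 < level_length I0 I1 c k.
Proof.
move=> c_gt0 I01; rewrite mulr_gt0 ?subr_gt0 // big_nat_cond.
by apply: prodr_gt0 => j /andP[/andP[j1 _] _]; apply: c_gt0.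
Qed.

Section MoranGeometry.
Variables (R : realType) (I0 I1 : R) (n : nat -> nat) (c : nat -> R).
Variables (a b : seq nat -> R).
Hypothesis ms : moran_structure I0 I1 n c a b.

Local Notation L := (level_length I0 I1 c).
Local Notation E := (moran_set n a b).

Lemma moran_le s : a s <= b s.
Proof. by case: ms. Qed.

Lemma moran_child m s i : word n m s -> (1 <= i <= n m.+1)%N ->
  a s <= a (rcons s i) /\ b (rcons s i) <= b s.
Proof.
move=> ws hi; case: ms => _ [_ [_ /(_ m.+1 s isT ws) [/(_ i hi) sub _]]].
have ab := moran_le (rcons s i).
have /andP[-> _] : a s <= a (rcons s i) <= b s.
  by have := sub (a (rcons s i)); rewrite /= !in_itv /= lexx ab; apply.
have /andP[_ ->] : a s <= b (rcons s i) <= b s.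
  by have := sub (b (rcons s i)); rewrite /= !in_itv /= lexx ab; apply.
by [].
Qed.

Lemma moran_length m s : word n m s -> b s - a s = L m.
Proof.
elim: m s => [|m IH] s.
  by move/word0 => ->; case: ms => _ [-> [-> _]]; rewrite /level_length big_geq ?mulr1.
case/wordSP => s' [i [-> ws hi]].
case: ms => _ [_ [_ /(_ m.+1 s' isT ws) [_ [_ ->]]]] //.
by rewrite IH // /level_length [in RHS]big_nat_recr //=; ring.
Qed.

Lemma moran_nested m j s : word n m s -> (j <= m)%N ->
  a (take j s) <= a s /\ b s <= b (take j s).
Proof.
elim: m s => [|m IH] s ws; first by rewrite leqn0 => /eqP ->; rewrite (word0 ws) !lexx.
rewrite leq_eqVlt => /orP[/eqP ->|jm]; first by case: ws => <- _; rewrite take_size !lexx.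
have [s' [i [es ws' hi]]] := wordSP ws.
have -> : take j s = take j s'.
  by rewrite es -cats1 takel_cat //; case: ws' => ->.
have [h1 h2] := IH s' ws' jm; have [h3 h4] := moran_child ws' hi.
by rewrite es; split; [apply: le_trans h1 h3|apply: le_trans h4 h2].
Qed.

Lemma moran_set_sub x : E x -> I0 <= x <= I1.
Proof.
move=> /(_ 1%N isT) [s [ws /andP[xa xb]]].
have [] := moran_nested ws (leq0n 1); rewrite take0; case: ms => _ [-> [-> _]] aI bI.
by rewrite (le_trans aI xa) (le_trans xb bI).
Qed.

Hypothesis c_gt0 : forall k, (1 <= k)%N -> 0 < c k.

Lemma moran_separated m s t : I0 < I1 -> word n m s -> word n m t -> s != t ->
  b s <= a t \/ b t <= a s.
Proof.
move=> I01; elim: m s t => [|m IH] s t; first by move=> /word0 -> /word0 ->.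
move=> /wordSP[s' [i [-> ws hi]]] /wordSP[t' [j [-> wt hj]]] st.
have [hs1 hs2] := moran_child ws hi; have [ht1 ht2] := moran_child wt hj.
have [es|s't'] := eqVneq s' t'; last first.
  by case: (IH _ _ ws wt s't') => h; [left|right]; apply: le_trans _ (le_trans h _).
subst t'; have ij : i <> j by move=> ij; move: st; rewrite ij eqxx.
case: ms => _ [_ [_ /(_ m.+1 s' isT ws) [_ [/(_ i j hi hj ij) disj _]]]].
have len_gt0 u : word n m.+1 u -> a u < b u.
  by move=> wu; rewrite -subr_gt0 (moran_length wu) level_length_gt0.
by apply: itvoo_disjoint_sep disj; apply: len_gt0; apply/word_rcons.
Qed.

Lemma moran_window_count k (x : R) : I0 < I1 ->
  (size (undup [seq s <- words n k | (x - 2 * L k < a s < x + L k)%R]) <= 3)%N.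
Proof.
move=> I01.
apply: (separated_in_window_size (p := a) (x := x) (L := L k) (undup_uniq _)) => [s t|s].
  rewrite !mem_undup !mem_filter => /andP[_ /mem_words ws] /andP[_ /mem_words wt] st.
  have := moran_length ws; have := moran_length wt.
  by case: (moran_separated I01 ws wt st) => h ? ?; [left|right]; lra.
by rewrite mem_undup mem_filter => /andP[].
Qed.

Lemma moran_cover k l (x Rr : R) : I0 < I1 -> (0 < l)%N -> Rr <= L k ->
  (covering_number (L (k + l)) (ball x Rr `&` E) <=
   (3 * \prod_(k.+1 <= j < (k + l).+1) n j)%N%:R%:E)%E.
Proof.
move=> I01 l_gt0 RrL.
set S := undup [seq s <- words n k | x - 2 * L k < a s < x + L k].
set mids := [seq (a t + b t) / 2 |
  t <- [seq s ++ t | s <- S, t <- words (fun j => n (k + j)) l]].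
apply: le_trans (covering_number_le (xs := mids) _) _; last first.
  rewrite lee_fin ler_nat size_map size_allpairs size_words_shift leq_mul2r.
  by rewrite moran_window_count ?orbT.
move=> y [/= /ballE /andP[yx1 yx2] /(_ (k + l)%N)] [|t [wt /andP[ty1 ty2]]].
  by rewrite addn_gt0 l_gt0 orbT.
have wkt := word_take (leq_addr l k) wt.
have [tk1 tk2] := moran_nested wt (leq_addr l k).
have Lt := moran_length wt; have Lk := moran_length wkt.
have Lt_gt0 : 0 < L (k + l) by apply: level_length_gt0.
exists ((a t + b t) / 2); last by apply/ballE; apply/andP; split; lra.
rewrite /mids -[t](cat_take_drop k); apply/map_f/allpairs_f; last first.
  by apply/mem_words/word_drop.
rewrite mem_undup mem_filter; apply/andP; split; first by apply/andP; split; lra.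
exact/mem_words.
Qed.

Lemma moran_cover_degenerate (r Rr x : R) : I0 = I1 -> 0 < r ->
  (covering_number r (ball x Rr `&` E) <= 1%:E)%E.
Proof.
move=> I01 r_gt0; apply: (le_trans (covering_number_le (xs := [:: I0]) _)) => //.
move=> y [_ /moran_set_sub yI]; exists I0; first by rewrite /= inE.
by apply/ballE; apply/andP; split; lra.
Qed.

Hypothesis n_gt0 : forall k, (1 <= k)%N -> (0 < n k)%N.

Lemma moran_set_nonempty : exists x, E x.
Proof.
pose w m := nseq m 1%N.
have ww m : word n m (w m) by split=> [|j jm]; rewrite ?size_nseq // nth_nseq jm n_gt0.
have aw m p : (m <= p)%N -> a (w m) <= a (w p).
  by move=> mp; have [] := moran_nested (ww p) mp; rewrite take_nseq.
have bw m p : (m <= p)%N -> b (w p) <= b (w m).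
  by move=> mp; have [] := moran_nested (ww p) mp; rewrite take_nseq.
have ab m p : a (w m) <= b (w p).
  apply: le_trans (aw m (maxn m p) (leq_maxl _ _)) _.
  by apply: le_trans (moran_le _) (bw _ _ (leq_maxr _ _)).
have A0 : [set a (w m) | m in setT] !=set0 by exists (a (w 0%N)), 0%N.
exists (sup [set a (w m) | m in setT]) => k _; exists (w k); split=> //.
apply/andP; split; first by apply: ub_le_sup; [exists (b (w 0%N)) => _ [m _ <-]|exists k].
by apply: ge_sup => // _ [m _ <-].
Qed.

End MoranGeometry.

Definition contraction (R : realType) (c : nat -> R) (k l : nat) : R :=
  \prod_(k.+1 <= j < (k + l).+1) c j.

Definition branching (R : realType) (n : nat -> nat) (k l : nat) : R :=
  \prod_(k.+1 <= j < (k + l).+1) (n j)%:R.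
Arguments branching {R} n k l.

Lemma level_length_split (R : realType) (I0 I1 : R) (c : nat -> R) k l :
  level_length I0 I1 c (k + l) = level_length I0 I1 c k * contraction c k l.
Proof. by rewrite /level_length (@big_cat_nat _ _ _ k.+1) ?mulrA // ltnS leq_addr. Qed.

Section Contraction.
Variables (R : realType) (n : nat -> nat) (c : nat -> R).
Hypothesis n_ge2 : forall k, (1 <= k)%N -> (2 <= n k)%N.
Hypothesis hc : forall k, (1 <= k)%N -> 0 < c k /\ (n k)%:R * c k < 1.

Lemma c_gt0 j : (1 <= j)%N -> 0 < c j.
Proof. by move=> /hc[]. Qed.

Lemma c_le_half j : (1 <= j)%N -> c j <= 2^-1.
Proof.
move=> j1; have [c0 nc] := hc j1.
have n2 : 2 <= (n j)%:R :> R by rewrite (ler_nat R 2) n_ge2.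
have := ler_wpM2r (ltW c0) n2.
lra.
Qed.

Lemma contraction_gt0 k l : 0 < contraction c k l.
Proof.
rewrite /contraction big_nat_cond; apply: prodr_gt0 => j /andP[/andP[kj _] _].
exact/c_gt0/(leq_trans _ kj).
Qed.

Lemma contraction_le k l : contraction c k l <= 2^-1 ^+ l.
Proof.
rewrite -[l in X in _ <= X](addKn k) -subSS -prodr_const_nat /contraction.
rewrite big_nat_cond [X in _ <= X]big_nat_cond.
apply: ler_prod => j /andP[/andP[kj _] _].
by rewrite ltW ?c_le_half ?c_gt0 //; apply: leq_trans kj.
Qed.

Lemma contraction_lt1 k l : (0 < l)%N -> contraction c k l < 1.
Proof.
move=> l_gt0; apply: le_lt_trans (contraction_le k l) _.
by rewrite exprn_ilt1 ?invr_ge0 ?invf_lt1 ?ltr1n // -lt0n.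
Qed.

Lemma branching_ge1 k l : 1 <= branching n k l :> R.
Proof.
rewrite /branching big_nat_cond.
apply: (big_ind (fun x : R => 1 <= x)) => [//|x y|j /andP[/andP[kj _] _]].
  exact: mulr_ege1.
by rewrite (ler_nat R 1); apply: leq_trans (n_ge2 (leq_trans _ kj)).
Qed.

Lemma level_length_le (I0 I1 : R) k : I0 <= I1 -> level_length I0 I1 c k <= I1 - I0.
Proof.
move=> I01; rewrite /level_length ler_piMr ?subr_ge0 //.
rewrite big_nat_cond prodr_ile1 // => j /andP[/andP[j1 _] _].
by rewrite ltW ?c_gt0 //= (le_trans (c_le_half j1)) // invf_le1 ?ler1n.
Qed.

End Contraction.

Definition lower_dim_bound (R : realType) (F : set R) (s b c0 : R) : Prop :=
  forall r Rr : R, 0 < r -> r < Rr -> Rr < b -> forall x, F x ->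
    ((c0 * (Rr / r) `^ s)%:E <= covering_number r (ball x Rr `&` F))%E.

Lemma lower_dim_bound_scale (R : realType) (F : set R) (s b0 c0 x r Rr beta Q N : R) :
  lower_dim_bound F s b0 c0 -> F x -> 0 <= s -> 0 < c0 -> 0 < beta -> 0 < Q ->
  0 < r -> r < Rr -> Rr < b0 -> beta / Q <= Rr / r ->
  (covering_number r (ball x Rr `&` F) <= N%:E)%E -> c0 * (beta / Q) `^ s <= N.
Proof.
move=> adm Fx s_ge0 c0_gt0 beta_gt0 Q_gt0 r_gt0 rRr Rrb0 ratio cover.
have := le_trans (adm r Rr r_gt0 rRr Rrb0 x Fx) cover; rewrite lee_fin.
apply: le_trans; rewrite ler_pM2l //.
by apply: (ge0_ler_powR s_ge0); rewrite // nnegrE divr_ge0 ?ltW // (lt_trans r_gt0).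
Qed.

Section MoranScale.
Variables (R : realType) (I0 I1 : R) (n : nat -> nat) (c : nat -> R).
Variables (a b : seq nat -> R) (s b0 c0 : R).
Hypothesis n_ge2 : forall k, (1 <= k)%N -> (2 <= n k)%N.
Hypothesis hc : forall k, (1 <= k)%N -> 0 < c k /\ (n k)%:R * c k < 1.
Hypothesis ms : moran_structure I0 I1 n c a b.
Hypotheses (s_ge0 : 0 <= s) (b0_gt0 : 0 < b0) (c0_gt0 : 0 < c0).
Hypothesis adm : lower_dim_bound (moran_set n a b) s b0 c0.

Let moran_set_point : exists x, moran_set n a b x.
Proof. by apply: moran_set_nonempty ms _ => k /n_ge2; apply: leq_trans. Qed.

(* E is then a single point, so every covering number is at most 1. *)
Lemma moran_scale_bound_degenerate : I0 = I1 ->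
  \forall l \near \oo, forall k, c0 * (1 / contraction c k l) `^ s <= 3 * branching n k l.
Proof.
move=> I0I1; have [x0 Ex0] := moran_set_point.
near=> l => k; set Q := contraction c k l.
have Q_gt0 : 0 < Q := contraction_gt0 hc k l.
have Q_lt1 : Q < 1 by apply: (contraction_lt1 n_ge2 hc); near: l; exact: nbhs_infty_gt.
apply: (lower_dim_bound_scale adm Ex0 (r := b0 / 2 * Q) (Rr := b0 / 2)) => //.
- by rewrite mulr_gt0 ?divr_gt0.
- by rewrite gtr_pMr ?divr_gt0.
- by rewrite ltr_pdivrMr // ltr_pMr // ltr1n.
- by rewrite invfM mulrA divff ?gt_eqF ?divr_gt0.
- apply: le_trans (moran_cover_degenerate ms _ _ I0I1 _) _.
    by rewrite mulr_gt0 ?divr_gt0.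
  by have := branching_ge1 R n_ge2 k l; rewrite lee_fin; lra.
Unshelve. all: by end_near.
Qed.

Let beta := Num.min 1 (b0 / (2 * (I1 - I0))).

Let beta_level_length k : I0 < I1 ->
  beta * level_length I0 I1 c k <= Num.min (level_length I0 I1 c k) (b0 / 2).
Proof.
move=> I01; have D_gt0 : 0 < I1 - I0 by rewrite subr_gt0.
have Lk_gt0 : 0 < level_length I0 I1 c k by apply: level_length_gt0 => // j /hc[].
have LkD := level_length_le n_ge2 hc k (ltW I01).
rewrite le_min ler_piMl ?(ltW Lk_gt0) ?ge_min ?lexx //=.
apply: le_trans (ler_pM _ _ (_ : beta <= b0 / (2 * (I1 - I0))) LkD) _.
- by rewrite le_min ler01 ltW // divr_gt0 ?mulr_gt0.
- exact: ltW.
- by rewrite ge_min lexx orbT.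
- by rewrite invfM mulrA divfK ?gt_eqF.
Qed.

Lemma moran_scale_bound_nondegenerate : I0 < I1 ->
  \forall l \near \oo, forall k, c0 * (beta / contraction c k l) `^ s <= 3 * branching n k l.
Proof.
move=> I01; have [x0 Ex0] := moran_set_point.
have D_gt0 : 0 < I1 - I0 by rewrite subr_gt0.
near=> l => k; set Q := contraction c k l; set Lk := level_length I0 I1 c k.
have l_gt0 : (0 < l)%N by near: l; exact: nbhs_infty_gt.
have Q_gt0 : 0 < Q := contraction_gt0 hc k l.
have Q_lt1 : Q < 1 := contraction_lt1 n_ge2 hc k l_gt0.
have Lk_gt0 : 0 < Lk by apply: level_length_gt0 => // j /hc[].
have LkD : Lk <= I1 - I0 := level_length_le n_ge2 hc k (ltW I01).
have small : (I1 - I0) * Q < b0 / 2.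
  apply: le_lt_trans (ler_wpM2l (ltW D_gt0) (contraction_le n_ge2 hc k l)) _.
  near: l; apply: filterS (nbhs_infty_gtr (2 * (I1 - I0) / b0)) => l lD.
  have l2l : (l%:R : R) < 2 ^+ l by rewrite -natrX ltr_nat ltn_expl.
  have := lt_trans lD l2l; rewrite exprVn ltr_pdivrMr ?ltr_pdivrMr ?exprn_gt0 //.
  lra.
apply: (lower_dim_bound_scale adm Ex0 (r := Lk * Q) (Rr := Num.min Lk (b0 / 2))) => //.
- by rewrite lt_min ltr01 !divr_gt0 ?mulr_gt0.
- by rewrite mulr_gt0.
- by rewrite lt_min gtr_pMr // Q_lt1 (le_lt_trans _ small) // ler_pM2r.
- by rewrite gt_min ltr_pdivrMr // ltr_pMr // ltr1n orbT.
- by rewrite invfM mulrA ler_pM2r ?invr_gt0 // ler_pdivlMr // beta_level_length.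
- rewrite -level_length_split.
  apply: le_trans (moran_cover ms _ x0 I01 l_gt0 _) _.
  + by move=> j /hc[].
  + by rewrite ge_min lexx.
  + by rewrite /branching natrM natr_prod.
Unshelve. all: by end_near.
Qed.

Lemma moran_scale_bound : I0 <= I1 ->
  exists2 beta : R, 0 < beta & \forall l \near \oo, forall k,
    c0 * (beta / contraction c k l) `^ s <= 3 * branching n k l.
Proof.
rewrite le_eqVlt => /orP[/eqP I0I1|I01].
  by exists 1; [exact: ltr01|exact: moran_scale_bound_degenerate].
exists beta; last exact: moran_scale_bound_nondegenerate.
by rewrite lt_min ltr01 divr_gt0 ?mulr_gt0 ?subr_gt0.
Qed.

End MoranScale.

Lemma ratio_ge_of_scale (R : realType) (c0 s beta P Q : R) (l : nat) :
  0 < c0 -> 0 <= s -> 0 < beta -> 0 < Q -> Q <= 2^-1 ^+ l -> (0 < l)%N ->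
  c0 * (beta / Q) `^ s <= 3 * P ->
  s - `|ln 3 - ln c0 - s * ln beta| / ln 2 / l%:R <= ln P / - ln Q.
Proof.
move=> c0_gt0 s_ge0 beta_gt0 Q_gt0 Q_le l_gt0 scale.
have ln2_gt0 : 0 < ln (2 : R) by rewrite ln_gt0 // ltr1n.
have lhs_gt0 : 0 < c0 * (beta / Q) `^ s by rewrite mulr_gt0 ?powR_gt0 ?divr_gt0.
have P_gt0 : 0 < P by have := lt_le_trans lhs_gt0 scale; lra.
have lnQ : l%:R * ln 2 <= - ln Q.
  have : ln Q <= ln (2^-1 ^+ l) by rewrite ler_ln // posrE exprn_gt0 // invr_gt0.
  by rewrite lnXn ?invr_gt0 // lnV ?posrE // mulNrn -mulr_natl; lra.
have lnQ_gt0 : 0 < - ln Q by apply: lt_le_trans lnQ; rewrite mulr_gt0 ?ltr0n.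
set C := ln 3 - ln c0 - s * ln beta.
have log_scale : s * - ln Q <= ln P + C.
  have := scale; rewrite -ler_ln ?posrE ?mulr_gt0 ?powR_gt0 ?divr_gt0 //.
  rewrite !lnM ?posrE ?powR_gt0 ?divr_gt0 ?invr_gt0 // ln_powR lnM ?posrE ?invr_gt0 //.
  by rewrite lnV ?posrE // /C; nra.
have C_le : C / - ln Q <= `|C| / ln 2 / l%:R.
  have inv_ge0 : 0 <= (- ln Q)^-1 by rewrite invr_ge0 ltW.
  apply: le_trans (ler_wpM2r inv_ge0 (ler_norm C)) _.
  have : (- ln Q)^-1 <= (ln 2 * l%:R)^-1.
    by rewrite lef_pV2 ?posrE ?mulr_gt0 ?ltr0n // mulrC.
  by move/(ler_wpM2l (normr_ge0 C)); rewrite invfM mulrA.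
have : s <= ln P / - ln Q + C / - ln Q by rewrite -mulrDl ler_pdivlMr // log_scale.
lra.
Qed.

Lemma limn_einf_ge (R : realType) (u : (\bar R)^nat) (s : R) :
  (forall e, 0 < e -> \forall l \near \oo, ((s - e)%:E <= u l)%E) ->
  (s%:E <= limn_einf u)%E.
Proof.
move=> ev; apply/lee_subgt0Pr => e e_gt0; rewrite limn_einf_lim -EFinB.
apply: lime_ge; first exact: is_cvg_einfs.
have [N _ uN] := ev e e_gt0.
near=> m; apply: le_ereal_inf_tmp => _ [k /= mk <-]; apply: uN => /=.
by apply: leq_trans mk; near: m; exists N.
Unshelve. all: by end_near.
Qed.

Lemma moran_bound_ge (R : realType) (n : nat -> nat) (c : nat -> R) (s C : R) :
  (\forall l \near \oo, forall k, (1 <= k)%N -> s - C / l%:R <= moran_ratio n c k l) ->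
  (s%:E <= moran_bound n c)%E.
Proof.
move=> ev; apply: limn_einf_ge => e e_gt0.
have small : \forall l \near \oo, C / l%:R <= e.
  near=> l; have l_gt0 : 0 < l%:R :> R by rewrite ltr0n; near: l; exact: nbhs_infty_gt.
  rewrite ler_pdivrMr // mulrC -ler_pdivrMr //; apply: ltW.
  by near: l; exact: nbhs_infty_gtr.
apply: filterS2 ev small => l ratio_ge Cl.
apply: le_ereal_inf_tmp => _ [k /= k1 <-]; rewrite lee_fin.
by apply: le_trans (ratio_ge k k1); rewrite lerD2l lerN2.
Unshelve. all: by end_near.
Qed.

Unset Implicit Arguments.
Theorem theorem2 (R : realType) (n : nat -> nat) (c : nat -> R) (I0 I1 : R)
    (E : set R) :
  (forall k : nat, (1 <= k)%N -> (2 <= n k)%N) ->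
  (forall k : nat, (1 <= k)%N -> 0 < c k /\ (n k)%:R * c k < 1) ->
  I0 <= I1 ->
  in_moran_class E I0 I1 n c ->
  (exists M : nat, forall k : nat, (1 <= k)%N -> (n k <= M)%N) ->
  (lower_dim E <= moran_bound n c)%E.
Proof.
move=> n_ge2 hc I01 [a [b [ms ->]]] _.
apply: ge_ereal_sup => _ [s [s_ge0 [b0 [c0 [b0_gt0 [c0_gt0 adm]]]]] <-].
have [beta beta_gt0 scale] := moran_scale_bound n_ge2 hc ms s_ge0 b0_gt0 c0_gt0 adm I01.
apply: (moran_bound_ge (C := `|ln 3 - ln c0 - s * ln beta| / ln 2)).
near=> l => k _.
apply: (ratio_ge_of_scale (P := branching n k l) (Q := contraction c k l)) => //.
- exact: (contraction_gt0 hc k l).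
- exact: (contraction_le n_ge2 hc k l).
- by near: l; exact: nbhs_infty_gt.
- by move: k; near: l; exact: scale.
Unshelve. all: by end_near.
Qed.
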